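(* Let $S$ be a simplicial poset, $\mu\colon E(S)\to\mathbb{Z}_+$ an edge multiplicity function, $I\in S$, and $c_I\colon E(I)\to\mathbb{Z}_+$ with $c_I(e)\in\{1,\dots,\mu(e)\}$. Then \[ \mathrm{lk}_{S_\mu}(I,c_I)\cong(\mathrm{lk}_S I)_{\tilde\mu,\tilde\nu}, \] where $\tilde\mu=\mu\circ\mathrm{rest}\colon E(\mathrm{lk}_S I)\to\mathbb{Z}_+$, and $\tilde\nu\colon V(\mathrm{lk}_S I)\to\mathbb{Z}_+$ is given by $\tilde\nu(J)=\prod_{e\in E(J)\setminus E(I)}\mu(e)$ for each $J>I$ with $\dim J=\dim I+1$.
   Context: A finite poset $S$ is a simplicial poset if for every $I\in S$ the lower set $S_{\leqslant I}$ is isomorphic to the poset of nonempty faces of a $k$-simplex; $k=\dim I$. $V(X)$, $E(X)$ denote the sets of vertices (dimension 0) and edges (dimension 1) of $X$ or below $X$; every subset of $V(J)$ is the vertex set of a unique element $\leqslant J$. $\mathrm{lk}_S I=S_{>I}$, a simplicial poset whose vertices are the $J>I$ with $\dim J=\dim I+1$ and whose edges are the $J>I$ with $\dim J=\dim I+2$. The map $\mathrm{rest}\colon E(\mathrm{lk}_SI)\to E(S)$ sends such $J$ to the unique edge of $S$ below $J$ with vertex set $V(J)\setminus V(I)$. Edge inflation: $S_\mu$ is the poset of pairs $(I,c_I)$, $c_I\colon E(I)\to\mathbb{Z}_+$, $c_I(e)\in\{1,\dots,\mu(e)\}$, ordered by $(I,c_I)<(J,c_J)$ iff $I<J$ and $c_I=c_J|_{E(I)}$.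 For a simplicial poset $L$ with edge function $\mu\colon E(L)\to\mathbb{Z}_+$ and vertex function $\nu\colon V(L)\to\mathbb{Z}_+$, $L_{\mu,\nu}$ is the poset of triples $(J,d_J,c_J)$ with $J\in L$, $d_J\colon V(J)\to\mathbb{Z}_+$, $d_J(v)\in\{1,\dots,\nu(v)\}$, $c_J\colon E(J)\to\mathbb{Z}_+$, $c_J(e)\in\{1,\dots,\mu(e)\}$, ordered by $(J,d_J,c_J)\leqslant(J',d_{J'},c_{J'})$ iff $J\leqslant J'$, $d_{J'}|_{V(J)}=d_J$ and $c_{J'}|_{E(J)}=c_J$. *)

From mathcomp Require Import all_boot.

Definition ltb {A : eqType} (leA : rel A) (x y : A) : bool := (y != x) && leA x y.

Definition partial_order {A : Type} (leA : rel A) : Prop :=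
  [/\ reflexive leA, antisymmetric leA & transitive leA].

Definition poset_iso {A B : Type} (leA : rel A) (leB : rel B) : Prop :=
  exists f : A -> B, bijective f /\ forall x y, leA x y = leB (f x) (f y).

Definition uplink {A : eqType} (leA : rel A) (x : A) := {y : A | ltb leA x y}.
Definition uplink_le {A : eqType} (leA : rel A) (x : A) : rel (uplink leA x) :=
  fun y z => leA (sval y) (sval z).

Section FinPoset.
Context {T : finType} (le : rel T).

(* S is a simplicial poset: a finite poset in which every lower set S_{<=I}
   is isomorphic to the poset of nonempty faces (nonempty subsets of the
   vertex set 'I_k.+1) of a k-simplex, ordered by inclusion. *)
Definition simplicial_poset : Prop :=
  partial_order le /\
  forall I : T, exists k : nat, exists f : T -> {set 'I_k.+1},
    [/\ {in [pred J | le J I] &, injective f},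
        (forall J, le J I -> f J != set0),
        (forall A : {set 'I_k.+1}, A != set0 -> exists2 J, le J I & f J = A) &
        (forall J J', le J I -> le J' I -> le J J' = (f J \subset f J'))].

Definition minimal (v : T) : bool := [forall w, le w v ==> (w == v)].
(* V(J): vertices (dimension-0 elements = minimal elements) below J *)
Definition Vs (J : T) : {set T} := [set v | minimal v && le v J].
(* dim J = k when S_{<=J} is the face poset of a k-simplex, i.e. |V(J)| = k+1 *)
Definition dim (J : T) : nat := (#|Vs J|).-1.
Definition Es (J : T) : {set T} := [set e | (dim e == 1) && le e J].

Definition link (I : T) := {J : T | ltb le I J}.
Definition link_le (I : T) : rel (link I) := fun J J' => le (val J) (val J').

(* rest : E(lk_S I) -> E(S), J |-> the unique edge e <= J with
   V(e) = V(J) \ V(I).  (The default value is irrelevant on edges of the link.) *)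
Definition rest (I : T) (J : link I) : T :=
  odflt (val J) [pick e in Es (val J) | Vs e == Vs (val J) :\: Vs I].

(* Edge-labelling c : E(I) -> Z_+ with c(e) in {1..mu e}, encoded as a
   function on T vanishing outside E(I). *)
Definition valid_c (mu : T -> nat) (I : T) (c : {ffun T -> nat}) : bool :=
  [forall e, if e \in Es I then (0 < c e <= mu e) else c e == 0].

Definition Smu (mu : T -> nat) := {p : T * {ffun T -> nat} | valid_c mu p.1 p.2}.
Definition Smu_le (mu : T -> nat) : rel (Smu mu) := fun x y =>
  le (val x).1 (val y).1 && [forall e in Es (val x).1, (val x).2 e == (val y).2 e].

Definition mkSmu (mu : T -> nat) (I : T) (c : {ffun T -> nat})
  (hc : valid_c mu I c) : Smu mu := exist _ (I, c) hc.

(* L_{mu,nu}: triples (J, d_J, c_J); d_J, c_J encoded as functions on T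
   vanishing outside V(J), resp. E(J). *)
Definition valid_dc (mu nu : T -> nat) (J : T) (d c : {ffun T -> nat}) : bool :=
  [forall v, if v \in Vs J then (0 < d v <= nu v) else d v == 0] &&
  [forall e, if e \in Es J then (0 < c e <= mu e) else c e == 0].

Definition Lmunu (mu nu : T -> nat) :=
  {t : T * {ffun T -> nat} * {ffun T -> nat} | valid_dc mu nu t.1.1 t.1.2 t.2}.
Definition Lmunu_le (mu nu : T -> nat) : rel (Lmunu mu nu) := fun x y =>
  [&& le (val x).1.1 (val y).1.1,
      [forall v in Vs (val x).1.1, (val y).1.2 v == (val x).1.2 v] &
      [forall e in Es (val x).1.1, (val y).2 e == (val x).2 e]].

End FinPoset.

Definition mu_tilde {T : finType} (le : rel T) (mu : T -> nat) (I : T)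
  : link le I -> nat := fun J => mu (rest le I J).
Definition nu_tilde {T : finType} (le : rel T) (mu : T -> nat) (I : T)
  : link le I -> nat := fun J => \prod_(e in Es le (val J) :\: Es le I) mu e.

From mathcomp Require Import all_boot zify.

(** An element (J, c_J) above (I, c_I) in S_mu is an element J of lk_S I
   together with the labels of the edges of J outside E(I), the others being
   fixed by c_I.  Such an edge e has one or two vertices outside V(I).  In the
   first case e lies in exactly one vertex v of lk_S I below J, and the labels
   of all such edges of v, a point of a box with nu~(v) points, are packed into
   one label in {1..nu~(v)} by a mixed-radix encoding.  In the second case
   e = rest w for exactly one edge w of lk_S I below J, and c_J(e) becomes the
   label of w.  Both orders are inclusion plus restriction of labellings, and
   this bijection respects both. *)

Set Implicit Arguments.
Unset Strict Implicit.
Unset Printing Implicit Defensive.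

Lemma set1_neq0 (K : finType) (i : K) : [set i] != set0.
Proof. by apply/set0Pn; exists i; rewrite inE. Qed.

Lemma setD_inj (K : finType) (C A B : {set K}) :
  C \subset A -> C \subset B -> A :\: C = B :\: C -> A = B.
Proof.
move=> /subsetP sCA /subsetP sCB eAB; apply/setP => x.
case: (boolP (x \in C)) => [xC | xNC]; first by rewrite sCA ?sCB.
by move/setP/(_ x): eAB; rewrite !inE xNC.
Qed.

Section SimplicialPoset.
Variables (T : finType) (le : rel T).
Hypothesis hS : simplicial_poset le.

Lemma le_refl : reflexive le.
Proof. by case: hS => [[]]. Qed.

Lemma le_trans : transitive le.
Proof. by case: hS => [[]]. Qed.

Lemma le_anti x y : le x y -> le y x -> x = y.
Proof. by case: hS => [[_ anti _]] _ lexy leyx; apply: anti; rewrite lexy leyx. Qed.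

Lemma Vs_subset J J' : le J J' -> Vs le J \subset Vs le J'.
Proof.
move=> leJJ'; apply/subsetP => v; rewrite !inE => /andP[-> leVJ] /=.
exact: le_trans leVJ leJJ'.
Qed.

Lemma in_Es e J : (e \in Es le J) = (#|Vs le e| == 2) && le e J.
Proof. by rewrite inE /dim; case: #|_| => [|[|[|]]]. Qed.

Lemma Es_mono X Y e : le X Y -> e \in Es le X -> e \in Es le Y.
Proof. by move=> leXY; rewrite !in_Es => /andP[-> /le_trans ->]. Qed.

Lemma simplex_chart X : exists k (f : T -> {set 'I_k.+1}),
  [/\ {in [pred J | le J X] &, injective f},
      (forall J, le J X -> f J != set0),
      (forall A, A != set0 -> exists2 J, le J X & f J = A),
      (forall J J', le J X -> le J' X -> le J J' = (f J \subset f J')) &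
      (forall v, le v X -> minimal le v = [exists i, f v == [set i]])].
Proof.
have [k [f [f_inj f_neq0 f_surj f_le]]] := hS.2 X.
exists k, f; split => // v leVX; apply/idP/existsP.
- move=> min_v; have /set0Pn[i fVi] := f_neq0 v leVX.
  have [w leWX fW] := f_surj [set i] (set1_neq0 i).
  have leWV : le w v by rewrite f_le // fW sub1set.
  by exists i; rewrite -fW (eqP (implyP (forallP min_v w) leWV)).
- case=> i /eqP fV; apply/forallP => w; apply/implyP => leWV.
  have leWX : le w X := le_trans leWV leVX.
  have : f w \subset f v by rewrite -f_le.
  rewrite fV subset1 (negbTE (f_neq0 w leWX)) orbF => /eqP fW.
  by apply/eqP/f_inj; rewrite ?inE // fW fV.
Qed.

Lemma le_Vs X J J' : le J X -> le J' X -> le J J' = (Vs le J \subset Vs le J').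
Proof.
move=> leJX leJ'X; apply/idP/idP; first exact: Vs_subset.
have [k [f [_ _ f_surj f_le f_min]]] := simplex_chart X.
move=> /subsetP sub; rewrite f_le //; apply/subsetP => i fJi.
have [w leWX fW] : exists2 w, le w X & f w = [set i].
  exact: f_surj (set1_neq0 i).
have leWJ : le w J by rewrite f_le // fW sub1set.
have /sub : w \in Vs le J by rewrite inE leWJ f_min // andbT; apply/existsP; exists i; rewrite fW.
by rewrite inE f_le // fW sub1set => /andP[].
Qed.

Lemma Vs_inj X J J' : le J X -> le J' X -> Vs le J = Vs le J' -> J = J'.
Proof. by move=> leJX leJ'X eV; apply: le_anti; rewrite (le_Vs leJX, le_Vs leJ'X) ?eV. Qed.

Lemma Vs_face X (A : {set T}) : A \subset Vs le X -> A != set0 ->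
  exists2 J, le J X & Vs le J = A.
Proof.
move=> /subsetP subAX A_neq0.
have [k [f [f_inj f_neq0 f_surj f_le f_min]]] := simplex_chart X.
have vertA v : v \in A -> minimal le v /\ le v X by move/subAX; rewrite inE => /andP[].
have [J leJX fJ] : exists2 J, le J X & f J = \bigcup_(v in A) f v.
  apply: f_surj; have /set0Pn[v Av] := A_neq0; have [_ leVX] := vertA v Av.
  exact: subset_neq0 (bigcup_sup v Av) (f_neq0 v leVX).
exists J => //; apply/setP => v; rewrite inE; apply/andP/idP => [[min_v leVJ] | Av].
- have leVX := le_trans leVJ leJX.
  move: (min_v); rewrite f_min // => /existsP[i /eqP fV].
  have : i \in f J by rewrite -sub1set -fV -f_le.
  rewrite fJ => /bigcupP[v' Av' fV'i].
  have [min_v' leV'X] := vertA v' Av'.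
  move: min_v'; rewrite f_min // => /existsP[i' /eqP fV'].
  move: fV'i; rewrite fV' inE => /eqP ii'; subst i'.
  by rewrite (f_inj v v') ?inE // fV fV'.
- have [min_v leVX] := vertA v Av.
  by rewrite min_v f_le // fJ (bigcup_sup v Av).
Qed.

Lemma Vs_neq0 J : Vs le J != set0.
Proof.
have [k [f [_ f_neq0 f_surj f_le f_min]]] := simplex_chart J.
have /set0Pn[i fJi] := f_neq0 J (le_refl J).
have [w leWJ fW] : exists2 w, le w J & f w = [set i].
  exact: f_surj (set1_neq0 i).
apply/set0Pn; exists w; rewrite inE leWJ f_min // andbT.
by apply/existsP; exists i; rewrite fW.
Qed.

End SimplicialPoset.

Section MixedRadix.
Variables (T : eqType) (m : T -> nat).

Fixpoint radix_enc (s : seq T) (c : T -> nat) : nat :=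
  if s is e :: s' then (c e).-1 + m e * radix_enc s' c else 0.

Fixpoint radix_dec (s : seq T) (x : nat) (e : T) : nat :=
  if s is e' :: s' then
    if e == e' then (x %% m e').+1 else radix_dec s' (x %/ m e') e
  else 0.

Lemma eq_radix_enc s c1 c2 : {in s, c1 =1 c2} -> radix_enc s c1 = radix_enc s c2.
Proof.
elim: s => //= e s IHs eq_c; rewrite eq_c ?mem_head // IHs // => e' s_e'.
by rewrite eq_c // inE s_e' orbT.
Qed.

Lemma radix_enc_lt s c : {in s, forall e, 0 < c e <= m e} ->
  radix_enc s c < \prod_(e <- s) m e.
Proof.
elim: s => [|e s IHs] c_range /=; first by rewrite big_nil.
rewrite big_cons; have /andP[ce_gt0 ce_le] := c_range e (mem_head _ _).
have lt_enc : radix_enc s c < \prod_(e <- s) m e.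
  by apply: IHs => e' s_e'; rewrite c_range // inE s_e' orbT.
have : m e * (radix_enc s c).+1 <= m e * \prod_(e <- s) m e.
  by rewrite leq_mul2l lt_enc orbT.
lia.
Qed.

Lemma radix_enc_inj s c1 c2 : {in s, forall e, 0 < c1 e <= m e} ->
  {in s, forall e, 0 < c2 e <= m e} ->
  radix_enc s c1 = radix_enc s c2 -> {in s, c1 =1 c2}.
Proof.
elim: s => [|e s IHs] //= c1_range c2_range.
have c1e := c1_range e (mem_head _ _); have c2e := c2_range e (mem_head _ _).
have m_gt0 : 0 < m e by lia.
have digit c : 0 < c e <= m e -> ((c e).-1 + m e * radix_enc s c) %% m e = (c e).-1.
  by move=> ?; rewrite addnC mulnC modnMDl modn_small //; lia.
have high c : 0 < c e <= m e -> ((c e).-1 + m e * radix_enc s c) %/ m e = radix_enc s c.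
  by move=> ?; rewrite addnC mulnC divnMDl // divn_small ?addn0 //; lia.
move=> eq_enc e'; rewrite inE => /predU1P[-> | s_e'].
  by move: (digit _ c1e) (digit _ c2e); rewrite eq_enc => ->; lia.
move: s_e'; apply: IHs; last by rewrite -(high _ c1e) -(high _ c2e) eq_enc.
  by move=> e'' s_e''; rewrite c1_range // inE s_e'' orbT.
by move=> e'' s_e''; rewrite c2_range // inE s_e'' orbT.
Qed.

Lemma radix_dec_range s x e : {in s, forall e, 0 < m e} -> e \in s ->
  0 < radix_dec s x e <= m e.
Proof.
elim: s x => //= e' s IHs x m_gt0; rewrite inE.
case: eqP => [-> _ | _ /= s_e]; first by rewrite ltn_pmod // m_gt0 ?mem_head.
by apply: IHs => // e'' s_e''; rewrite m_gt0 // inE s_e'' orbT.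
Qed.

Lemma radix_decK s x : uniq s -> {in s, forall e, 0 < m e} ->
  x < \prod_(e <- s) m e -> radix_enc s (radix_dec s x) = x.
Proof.
elim: s x => [|e s IHs] x /=; first by rewrite big_nil; case: x.
case/andP => e_notin_s uniq_s m_gt0; rewrite big_cons eqxx => x_lt.
have me_gt0 : 0 < m e by rewrite m_gt0 ?mem_head.
rewrite (@eq_radix_enc s _ (radix_dec s (x %/ m e))); last first.
  by move=> e' s_e'; case: eqP => // ee'; rewrite -ee' s_e' in e_notin_s.
rewrite IHs //; first by rewrite mulnC addnC -divn_eq.
  by move=> e' s_e'; rewrite m_gt0 // inE s_e' orbT.
by rewrite ltn_divLR // mulnC.
Qed.

End MixedRadix.

Section Link.
Variables (T : finType) (le : rel T) (I : T).
Hypothesis hS : simplicial_poset le.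
Local Notation VI := (Vs le I).
Local Notation n := #|Vs le I|.
Local Notation Lk := (link le I).

Lemma link_ge (K : Lk) : le I (val K).
Proof. by case: K => K /= /andP[]. Qed.

Lemma link_neq (K : Lk) : val K != I.
Proof. by case: K => K /= /andP[]. Qed.

Lemma Vs_link_proper (K : Lk) : VI \proper Vs le (val K).
Proof.
rewrite properEneq Vs_subset ?link_ge // andbT.
apply: contra_neq (link_neq K) => eVI.
by apply: (Vs_inj hS (le_refl hS _) (link_ge K)); rewrite eVI.
Qed.

Lemma exists_link_face X (A : {set T}) : le I X -> VI \proper A -> A \subset Vs le X ->
  exists2 K : Lk, le (val K) X & Vs le (val K) = A.
Proof.
move=> leIX /andP[subIA not_subAI] subAX.
have [J leJX VJ] := Vs_face hS subAX (subset_neq0 subIA (Vs_neq0 hS I)).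
have ltIJ : ltb le I J.
  rewrite /ltb (le_Vs hS leIX leJX) VJ subIA andbT.
  by apply: contraNneq not_subAI => eJI; rewrite -VJ eJI.
by exists (exist _ J ltIJ).
Qed.

Lemma link_vertexE (v : Lk) : minimal (link_le le I) v = (#|Vs le (val v)| == n.+1).
Proof.
have /andP[subIV not_subVI] := Vs_link_proper v.
apply/idP/eqP => [min_v | card_v].
- have [b Vb bNI] := subsetPn not_subVI.
  have [K leKV VK] : exists2 K : Lk, le (val K) (val v) & Vs le (val K) = b |: VI.
    apply: exists_link_face; rewrite ?link_ge //.
      by rewrite properEcard subsetUr cardsU1 bNI ltnSn.
    by rewrite subUset sub1set Vb.
  by rewrite -(eqP (implyP (forallP min_v K) leKV)) VK cardsU1 bNI.
- apply/forallP => w; apply/implyP => leWV; apply/eqP/val_inj.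
  apply: (Vs_inj hS leWV (le_refl hS _)); apply/eqP.
  by rewrite eqEcard Vs_subset // card_v (proper_card (Vs_link_proper w)).
Qed.

Lemma in_Vs_link (K v : Lk) :
  (v \in Vs (link_le le I) K) = (#|Vs le (val v)| == n.+1) && le (val v) (val K).
Proof. by rewrite inE link_vertexE. Qed.

Lemma link_vertex_Vs (v : Lk) b : #|Vs le (val v)| = n.+1 ->
  b \in Vs le (val v) :\: VI -> Vs le (val v) = b |: VI.
Proof.
move=> card_v Db; have subIV := proper_sub (Vs_link_proper v).
have /cards1P[x Dx] : #|Vs le (val v) :\: VI| == 1 by rewrite cardsDS // card_v subSnn.
move: (Db); rewrite Dx inE => /eqP eb; subst x; move: Db; rewrite inE => /andP[bNI _].
apply: setD_inj subIV (subsetUr _ _) _; rewrite Dx; apply/setP => y.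
rewrite in_setD in_setU1 in_set1.
by case: (eqVneq y b) => [-> | _] /=; rewrite ?bNI ?andNb.
Qed.

Lemma card_Vs_link (w : Lk) : #|Vs (link_le le I) w| = #|Vs le (val w)| - n.
Proof.
have subIW := proper_sub (Vs_link_proper w).
pose fresh (v : Lk) := Vs le (val v) :\: VI.
have fresh_inj : {in Vs (link_le le I) w &, injective fresh}.
  move=> v v'; rewrite !in_Vs_link => /andP[_ leVW] /andP[_ leV'W] eq_fresh.
  apply/val_inj/(Vs_inj hS leVW leV'W).
  exact: setD_inj (proper_sub (Vs_link_proper v)) (proper_sub (Vs_link_proper v')) eq_fresh.
have fresh_img : fresh @: Vs (link_le le I) w = set1 @: (Vs le (val w) :\: VI).
  apply/setP => A; apply/imsetP/imsetP => [[v] | [b Db ->]].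
  - rewrite in_Vs_link => /andP[/eqP card_v leVW] ->.
    have /cards1P[b Db] : #|fresh v| == 1.
      by rewrite cardsDS ?card_v ?subSnn // proper_sub ?Vs_link_proper.
    exists b => //; have : b \in fresh v by rewrite Db set11.
    by rewrite !in_setD => /andP[-> /(subsetP (Vs_subset hS leVW))].
  - move: (Db); rewrite in_setD => /andP[bNI Wb].
    have [v leVW Vv] : exists2 v : Lk, le (val v) (val w) & Vs le (val v) = b |: VI.
      apply: exists_link_face; rewrite ?link_ge //.
        by rewrite properEcard subsetUr cardsU1 bNI ltnSn.
      by rewrite subUset sub1set Wb.
    exists v; first by rewrite in_Vs_link Vv cardsU1 bNI add1n eqxx leVW.
    apply/setP => y; rewrite /fresh Vv in_setD in_setU1 in_set1.
    by case: (eqVneq y b) => [-> | _] /=; rewrite ?bNI ?andNb.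
by rewrite -cardsDS // -(card_in_imset fresh_inj) fresh_img card_imset //; apply: set1_inj.
Qed.

Lemma in_Es_link (K w : Lk) :
  (w \in Es (link_le le I) K) = (#|Vs le (val w)| == n.+2) && le (val w) (val K).
Proof.
rewrite inE /dim card_Vs_link; congr (_ && _).
by have := proper_card (Vs_link_proper w); lia.
Qed.

Lemma fresh_edge_not_sub X e : le I X -> e \in Es le X -> e \notin Es le I ->
  ~~ (Vs le e \subset VI).
Proof.
move=> leIX; rewrite !in_Es => /andP[card_e leEX]; apply: contra.
by rewrite card_e (le_Vs hS leEX leIX).
Qed.

Lemma restP (w : Lk) : #|Vs le (val w)| = n.+2 ->
  [/\ le (rest le I w) (val w), Vs le (rest le I w) = Vs le (val w) :\: VI
    & #|Vs le (rest le I w)| = 2].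
Proof.
move=> card_w.
have card_D : #|Vs le (val w) :\: VI| = 2.
  by rewrite cardsDS ?proper_sub ?Vs_link_proper // card_w; lia.
rewrite /rest; case: pickP => [e /andP[Ee /eqP VE] | none] /=.
  by move: Ee; rewrite in_Es VE card_D => /andP[_ ->].
have D_neq0 : Vs le (val w) :\: VI != set0 by rewrite -card_gt0 card_D.
have [e leEW VE] := Vs_face hS (subsetDl _ _) D_neq0.
by have := none e; rewrite /= in_Es VE card_D leEW !eqxx.
Qed.

Lemma rest_in_Es (w : Lk) X : #|Vs le (val w)| = n.+2 -> le (val w) X ->
  rest le I w \in Es le X.
Proof.
move=> card_w leWX; have [leRW _ card_R] := restP card_w.
by rewrite in_Es card_R (le_trans hS leRW leWX).
Qed.

Lemma rest_notin_Es (w : Lk) X : #|Vs le (val w)| = n.+2 ->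
  #|Vs le X :\: VI| <= 1 -> rest le I w \notin Es le X.
Proof.
move=> card_w card_X; have [_ VR card_R] := restP card_w.
rewrite in_Es card_R /=; apply/negP => leRX.
have : Vs le (rest le I w) \subset Vs le X :\: VI.
  apply/subsetP => x Rx; move: (Rx); rewrite {1}VR in_setD => /andP[xNI _].
  by rewrite in_setD xNI (subsetP (Vs_subset hS leRX)).
by move/subset_leq_card; rewrite card_R; lia.
Qed.

Lemma rest_inj_below X (w w' : Lk) : #|Vs le (val w)| = n.+2 -> #|Vs le (val w')| = n.+2 ->
  le (val w) X -> le (val w') X -> rest le I w = rest le I w' -> w = w'.
Proof.
move=> card_w card_w' leWX leW'X eR; apply/val_inj/(Vs_inj hS leWX leW'X).
apply: setD_inj (proper_sub (Vs_link_proper w)) (proper_sub (Vs_link_proper w')) _.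
by have [_ <- _] := restP card_w; have [_ <- _] := restP card_w'; rewrite eR.
Qed.

Lemma fresh_edge_vertex_uniq X (v v' : Lk) e :
  #|Vs le (val v)| = n.+1 -> #|Vs le (val v')| = n.+1 -> le (val v) X -> le (val v') X ->
  e \in Es le (val v) :\: Es le I -> e \in Es le (val v') :\: Es le I -> v = v'.
Proof.
move=> card_v card_v' leVX leV'X; rewrite !in_setD => /andP[eNI Ev] /andP[_ Ev'].
have [b Eb bNI] := subsetPn (fresh_edge_not_sub (link_ge v) Ev eNI).
have Vb (u : Lk) : e \in Es le (val u) -> b \in Vs le (val u) :\: VI.
  by rewrite in_Es in_setD bNI => /andP[_ /(Vs_subset hS)/subsetP ->].
apply/val_inj/(Vs_inj hS leVX leV'X).
by rewrite (link_vertex_Vs card_v (Vb v Ev)) (link_vertex_Vs card_v' (Vb v' Ev')).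
Qed.

Lemma fresh_edge_in_vertex (K : Lk) e b : e \in Es le (val K) -> e \notin Es le I ->
  Vs le e :\: VI = [set b] ->
  exists2 v, v \in Vs (link_le le I) K & e \in Es le (val v) :\: Es le I.
Proof.
move=> EK eNI De; have : b \in Vs le e :\: VI by rewrite De set11.
rewrite in_setD => /andP[bNI eb]; move: (EK); rewrite in_Es => /andP[card_e leEK].
have [v leVK Vv] : exists2 v : Lk, le (val v) (val K) & Vs le (val v) = b |: VI.
  apply: exists_link_face; first exact: link_ge.
    by rewrite properEcard subsetUr cardsU1 bNI ltnSn.
  by rewrite subUset sub1set (subsetP (Vs_subset hS leEK)) // proper_sub ?Vs_link_proper.
exists v; first by rewrite in_Vs_link Vv cardsU1 bNI add1n eqxx leVK.
rewrite in_setD eNI in_Es card_e (le_Vs hS leEK leVK) Vv; apply/subsetP => x ex.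
rewrite in_setU1; case: (boolP (x \in VI)) => xI; rewrite ?orbT //= orbF.
have : x \in Vs le e :\: VI by rewrite in_setD xI ex.
by rewrite De in_set1.
Qed.

Lemma fresh_edge_is_rest (K : Lk) e : e \in Es le (val K) -> Vs le e :\: VI = Vs le e ->
  exists2 w, w \in Es (link_le le I) K & rest le I w = e.
Proof.
move=> EK De; move: (EK); rewrite in_Es => /andP[/eqP card_e leEK].
have DA : (VI :|: Vs le e) :\: VI = Vs le e by rewrite setDUl setDv set0U.
have card_A : #|VI :|: Vs le e| = n.+2.
  have := cardsDS (subsetUl VI (Vs le e)); have := subset_leq_card (subsetUl VI (Vs le e)).
  by rewrite DA card_e; lia.
have [w leWK Vw] : exists2 w : Lk, le (val w) (val K) & Vs le (val w) = VI :|: Vs le e.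
  apply: exists_link_face; first exact: link_ge.
    by rewrite properEcard subsetUl card_A /=; lia.
  by rewrite subUset (proper_sub (Vs_link_proper K)) Vs_subset.
have card_w : #|Vs le (val w)| = n.+2 by rewrite Vw.
exists w; first by rewrite in_Es_link card_w eqxx leWK.
have [leRW VR _] := restP card_w.
by apply: (Vs_inj hS (le_trans hS leRW leWK) leEK); rewrite VR Vw DA.
Qed.

Lemma fresh_edge_cover (K : Lk) e : e \in Es le (val K) -> e \notin Es le I ->
  (exists2 v, v \in Vs (link_le le I) K & e \in Es le (val v) :\: Es le I) \/
  (exists2 w, w \in Es (link_le le I) K & rest le I w = e).
Proof.
move=> EK eNI; move: (EK); rewrite in_Es => /andP[/eqP card_e _].
have : 0 < #|Vs le e :\: VI| by rewrite card_gt0 setD_eq0 (fresh_edge_not_sub (link_ge K) EK eNI).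
have : #|Vs le e :\: VI| <= 2 by rewrite -card_e subset_leq_card ?subsetDl.
case: (eqVneq #|Vs le e :\: VI| 1) => [/eqP/cards1P[b De] _ _ | card_D le2 gt0].
  by left; apply: fresh_edge_in_vertex De.
right; apply: fresh_edge_is_rest => //; apply/eqP.
by rewrite eqEcard subsetDl card_e; lia.
Qed.

End Link.

Lemma labellingP (U : finType) (A : {set U}) (b f : U -> nat) :
  reflect ((forall x, x \in A -> 0 < f x <= b x) /\ (forall x, x \notin A -> f x = 0))
          [forall x, if x \in A then 0 < f x <= b x else f x == 0].
Proof.
apply: (iffP forallP) => [lab | [inA notinA] x].
  by split=> x Ax; have := lab x; rewrite ?Ax // (negbTE Ax) => /eqP.
by case: ifPn => Ax; [apply: inA | rewrite notinA].
Qed.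

Section LinkOfInflation.
Variables (T : finType) (le : rel T) (mu : T -> nat) (I : T) (c : {ffun T -> nat}).
Hypothesis hS : simplicial_poset le.
Hypothesis hmu : forall e, dim le e = 1 -> 0 < mu e.
Hypothesis hc : valid_c le mu I c.
Local Notation Lk := (link le I).
Local Notation x0 := (mkSmu le mu I c hc).

Definition fresh_edges (v : Lk) : seq T := enum (Es le (val v) :\: Es le I).

Lemma fresh_edges_Es (v : Lk) X e : le (val v) X -> e \in fresh_edges v -> e \in Es le X.
Proof. by move=> leVX; rewrite mem_enum in_setD => /andP[_]; apply: Es_mono. Qed.

Lemma fresh_edges_mu_gt0 (v : Lk) : {in fresh_edges v, forall e, 0 < mu e}.
Proof.
by move=> e; rewrite mem_enum in_setD => /andP[_]; rewrite inE => /andP[/eqP/hmu].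
Qed.

Lemma nu_tilde_fresh (v : Lk) : nu_tilde le mu I v = \prod_(e <- fresh_edges v) mu e.
Proof. by rewrite /nu_tilde /fresh_edges big_enum. Qed.

Definition vertex_labels (K : Lk) (cJ : {ffun T -> nat}) : {ffun Lk -> nat} :=
  [ffun v => if v \in Vs (link_le le I) K then (radix_enc mu (fresh_edges v) cJ).+1 else 0].

Definition edge_labels (K : Lk) (cJ : {ffun T -> nat}) : {ffun Lk -> nat} :=
  [ffun w => if w \in Es (link_le le I) K then cJ (rest le I w) else 0].

Lemma labels_valid (K : Lk) (cJ : {ffun T -> nat}) : valid_c le mu (val K) cJ ->
  valid_dc (link_le le I) (mu_tilde le mu I) (nu_tilde le mu I)
           K (vertex_labels K cJ) (edge_labels K cJ).
Proof.
move/labellingP => [cJ_range _]; apply/andP; split; apply/labellingP.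
- split=> v Kv; rewrite ffunE ?Kv ?(negbTE Kv) //.
  move: Kv; rewrite (in_Vs_link hS) => /andP[_ leVK].
  rewrite nu_tilde_fresh /=; apply: radix_enc_lt => e /(fresh_edges_Es leVK).
  exact: cJ_range.
- split=> w Kw; rewrite ffunE ?Kw ?(negbTE Kw) //.
  move: Kw; rewrite (in_Es_link hS) => /andP[/eqP card_w leWK].
  exact/cJ_range/(rest_in_Es hS card_w leWK).
Qed.

Lemma vertex_labels_mono (K K' : Lk) (cJ : {ffun T -> nat}) : le (val K) (val K') ->
  {in Vs (link_le le I) K, vertex_labels K' cJ =1 vertex_labels K cJ}.
Proof.
move=> leKK' v Kv; rewrite !ffunE Kv; move: Kv.
by rewrite !(in_Vs_link hS) => /andP[-> /= /le_trans->].
Qed.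

Lemma edge_labels_mono (K K' : Lk) (cJ : {ffun T -> nat}) : le (val K) (val K') ->
  {in Es (link_le le I) K, edge_labels K' cJ =1 edge_labels K cJ}.
Proof.
move=> leKK' w Kw; rewrite !ffunE Kw; move: Kw.
by rewrite !(in_Es_link hS) => /andP[-> /= /le_trans->].
Qed.

Lemma labels_restrict (K : Lk) (cJ cJ' : {ffun T -> nat}) : {in Es le (val K), cJ =1 cJ'} ->
  {in Vs (link_le le I) K, vertex_labels K cJ =1 vertex_labels K cJ'} /\
  {in Es (link_le le I) K, edge_labels K cJ =1 edge_labels K cJ'}.
Proof.
move=> eq_c; split=> u Ku; rewrite !ffunE Ku.
- move: Ku; rewrite (in_Vs_link hS) => /andP[_ leUK].
  by congr _.+1; apply: eq_radix_enc => e /(fresh_edges_Es leUK)/eq_c.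
- move: Ku; rewrite (in_Es_link hS) => /andP[/eqP card_u leUK].
  exact/eq_c/(rest_in_Es hS card_u leUK).
Qed.

Lemma labels_determine (K : Lk) (cJ cJ' : {ffun T -> nat}) :
  {in Es le (val K), forall e, 0 < cJ e <= mu e} ->
  {in Es le (val K), forall e, 0 < cJ' e <= mu e} ->
  {in Es le I, cJ =1 cJ'} ->
  {in Vs (link_le le I) K, vertex_labels K cJ =1 vertex_labels K cJ'} ->
  {in Es (link_le le I) K, edge_labels K cJ =1 edge_labels K cJ'} ->
  {in Es le (val K), cJ =1 cJ'}.
Proof.
move=> cJ_range cJ'_range eq_I eq_vl eq_el e Ke.
case: (boolP (e \in Es le I)) => [/eq_I // | eNI].
have [[v Kv eV] | [w Kw <-]] := fresh_edge_cover hS Ke eNI; last first.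
  by have := eq_el w Kw; rewrite !ffunE Kw.
have := eq_vl v Kv; rewrite !ffunE Kv => -[] /radix_enc_inj; apply; last by rewrite mem_enum.
  all: move: Kv; rewrite (in_Vs_link hS) => /andP[_ leVK] e' /(fresh_edges_Es leVK).
  exact: cJ_range.
exact: cJ'_range.
Qed.

Lemma Smu_le_anti (p q : Smu le mu) : Smu_le le mu p q -> Smu_le le mu q p -> p = q.
Proof.
case: p q => [[J cJ] vJ] [[J' cJ'] vJ'] /andP[/= leJJ' /forall_inP eq_c] /andP[/= leJ'J _].
have eJ : J = J' := le_anti hS leJJ' leJ'J; subst J'.
have /labellingP[_ cJ0] := vJ; have /labellingP[_ cJ'0] := vJ'.
apply/val_inj; congr (_, _); apply/ffunP => e.
by case: (boolP (e \in Es le J)) => [/eq_c/eqP // | eNJ]; rewrite cJ0 ?cJ'0.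
Qed.

Lemma Smu_gt_x0 (p : Smu le mu) :
  ltb (Smu_le le mu) x0 p = ltb le I (val p).1 && [forall e in Es le I, c e == (val p).2 e].
Proof.
rewrite /ltb /Smu_le /=; apply/idP/idP.
- case/andP => pNx0 /andP[leIp eq_I]; rewrite leIp eq_I !andbT.
  apply: contraNneq pNx0 => pI; apply/eqP/Smu_le_anti; rewrite /Smu_le /= pI le_refl //=.
  by apply/forall_inP => e /(forall_inP eq_I); rewrite eq_sym.
- by case/andP => /andP[pNI ->] ->; rewrite !andbT; apply: contraNneq pNI => ->.
Qed.

Local Notation Up := (uplink (Smu_le le mu) x0).

Definition up_face (x : Up) : T := (val (val x)).1.
Definition up_labels (x : Up) : {ffun T -> nat} := (val (val x)).2.

Lemma up_labels_valid (x : Up) : valid_c le mu (up_face x) (up_labels x).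
Proof. exact: valP (val x). Qed.

Lemma up_face_gt (x : Up) : ltb le I (up_face x).
Proof. by have := valP x; rewrite Smu_gt_x0 => /andP[]. Qed.

Lemma up_labels_I (x : Up) : {in Es le I, c =1 up_labels x}.
Proof. by have := valP x; rewrite Smu_gt_x0 => /andP[_ /forall_inP eq_I] e /eq_I/eqP. Qed.

Definition up_link (x : Up) : Lk := exist _ (up_face x) (up_face_gt x).

Definition to_Lmunu (x : Up) : Lmunu (link_le le I) (mu_tilde le mu I) (nu_tilde le mu I) :=
  exist _ (up_link x, vertex_labels (up_link x) (up_labels x),
           edge_labels (up_link x) (up_labels x))
        (labels_valid (K := up_link x) (up_labels_valid x)).

Lemma to_Lmunu_mono (x y : Up) : uplink_le (Smu_le le mu) x0 x y =
  Lmunu_le (link_le le I) (mu_tilde le mu I) (nu_tilde le mu I) (to_Lmunu x) (to_Lmunu y).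
Proof.
rewrite /uplink_le /Smu_le /Lmunu_le /=; set X := up_link x; set Y := up_link y.
change (le (val X) (val Y) && [forall e in Es le (val X), up_labels x e == up_labels y e] =
  [&& le (val X) (val Y),
      [forall v in Vs (link_le le I) X,
         vertex_labels Y (up_labels y) v == vertex_labels X (up_labels x) v] &
      [forall w in Es (link_le le I) X,
         edge_labels Y (up_labels y) w == edge_labels X (up_labels x) w]]).
case: (boolP (le (val X) (val Y))) => // leXY /=; apply/idP/idP.
- move/forall_inP => eq_c.
  have [eq_vl eq_el] := labels_restrict (K := X) (fun e Xe => eqP (eq_c e Xe)).
  apply/andP; split; apply/forall_inP => u Xu.
    by rewrite (vertex_labels_mono _ leXY Xu) eq_vl.
  by rewrite (edge_labels_mono _ leXY Xu) eq_el.
- case/andP => /forall_inP eq_vl /forall_inP eq_el; apply/forall_inP => e Xe.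
  have /labellingP[x_range _] := up_labels_valid x.
  have /labellingP[y_range _] := up_labels_valid y.
  apply/eqP; apply: (labels_determine (K := X)) => //.
  + by move=> e' /(Es_mono hS leXY); apply: y_range.
  + by move=> e' Ie'; rewrite -!up_labels_I.
  + by move=> u Xu; have := eq_vl u Xu; rewrite (vertex_labels_mono _ leXY Xu) eq_sym => /eqP.
  + by move=> u Xu; have := eq_el u Xu; rewrite (edge_labels_mono _ leXY Xu) eq_sym => /eqP.
Qed.

Lemma to_Lmunu_inj : injective to_Lmunu.
Proof.
have Lmunu_le_refl t : Lmunu_le (link_le le I) (mu_tilde le mu I) (nu_tilde le mu I) t t.
  by apply/and3P; split; [apply: (le_refl hS) | apply/forall_inP.. ] => // u _.
move=> x y exy; apply/val_inj/Smu_le_anti.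
  by have := to_Lmunu_mono x y; rewrite exy Lmunu_le_refl.
by have := to_Lmunu_mono y x; rewrite exy Lmunu_le_refl.
Qed.

Definition lift_labels (K : Lk) (d c' : {ffun Lk -> nat}) : {ffun T -> nat} :=
  [ffun e => if e \notin Es le (val K) then 0
    else if e \in Es le I then c e
    else if [pick v in Vs (link_le le I) K | e \in fresh_edges v] is Some v
      then radix_dec mu (fresh_edges v) (d v).-1 e
    else if [pick w in Es (link_le le I) K | rest le I w == e] is Some w then c' w
    else 1].
(* The final branch is unreachable by fresh_edge_cover; 1 merely keeps the
   labelling in range without invoking it. *)

Section Lift.
Variables (K : Lk) (d c' : {ffun Lk -> nat}).
Hypothesis hdc : valid_dc (link_le le I) (mu_tilde le mu I) (nu_tilde le mu I) K d c'.

Lemma lift_labels_valid : valid_c le mu (val K) (lift_labels K d c').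
Proof.
have /andP[/labellingP[d_range _] /labellingP[c'_range _]] := hdc.
apply/labellingP; split=> e Ke; rewrite ffunE Ke //=.
have /labellingP[c_range _] := hc.
case: ifPn => [/c_range // | _].
case: pickP => [v /andP[_ eV] | _]; first exact: radix_dec_range _ (@fresh_edges_mu_gt0 v) eV.
case: pickP => [w /andP[Kw /eqP <-] | _]; first exact: c'_range.
by apply: hmu; move: Ke; rewrite inE => /andP[/eqP].
Qed.

Lemma lift_labels_I : {in Es le I, c =1 lift_labels K d c'}.
Proof. by move=> e Ie; rewrite ffunE Ie (Es_mono hS (link_ge K) Ie). Qed.

Lemma lift_labels_fresh v e : v \in Vs (link_le le I) K -> e \in fresh_edges v ->
  lift_labels K d c' e = radix_dec mu (fresh_edges v) (d v).-1 e.
Proof.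
rewrite (in_Vs_link hS) => /andP[/eqP card_v leVK] eV.
have := eV; rewrite mem_enum in_setD => /andP[eNI _].
rewrite ffunE (fresh_edges_Es leVK eV) (negbTE eNI) /=.
case: pickP => [v' /andP[Kv' eV'] | /(_ v)]; last by rewrite (in_Vs_link hS) card_v eqxx leVK eV.
move: Kv'; rewrite (in_Vs_link hS) => /andP[/eqP card_v' leV'K].
move: eV eV'; rewrite !mem_enum => eV eV'.
by rewrite (fresh_edge_vertex_uniq hS card_v' card_v leV'K leVK eV' eV).
Qed.

Lemma lift_labels_rest w : w \in Es (link_le le I) K -> lift_labels K d c' (rest le I w) = c' w.
Proof.
move=> Kw; have := Kw; rewrite (in_Es_link hS) => /andP[/eqP card_w leWK].
rewrite ffunE (rest_in_Es hS card_w leWK) /=.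
rewrite (negbTE (rest_notin_Es hS card_w _)); last by rewrite setDv cards0.
case: pickP => [v /andP[Kv] | _].
  move: Kv; rewrite (in_Vs_link hS) mem_enum in_setD => /andP[/eqP card_v _].
  rewrite (negbTE (rest_notin_Es hS (X := val v) card_w _)) ?andbF //.
  by rewrite cardsDS ?card_v ?subSnn // proper_sub ?Vs_link_proper.
case: pickP => [w' /andP[Kw' /eqP eR] | /(_ w)]; last by rewrite Kw eqxx.
move: Kw'; rewrite (in_Es_link hS) => /andP[/eqP card_w' leW'K].
by rewrite (rest_inj_below hS card_w' card_w leW'K leWK eR).
Qed.

Lemma vertex_labels_lift : vertex_labels K (lift_labels K d c') = d.
Proof.
have /andP[/labellingP[d_range d0] _] := hdc.
apply/ffunP => v; rewrite ffunE; case: ifPn => [Kv | /d0 //].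
rewrite (@eq_radix_enc _ mu _ _ (radix_dec mu (fresh_edges v) (d v).-1)); last first.
  by move=> e; apply: lift_labels_fresh.
have /andP[dv_gt0 dv_le] := d_range v Kv.
rewrite radix_decK ?prednK ?enum_uniq //; first exact: fresh_edges_mu_gt0.
by rewrite -nu_tilde_fresh; case: (d v) dv_gt0 dv_le.
Qed.

Lemma edge_labels_lift : edge_labels K (lift_labels K d c') = c'.
Proof.
have /andP[_ /labellingP[_ c'0]] := hdc.
by apply/ffunP => w; rewrite ffunE; case: ifPn => [/lift_labels_rest | /c'0].
Qed.

Lemma lift_labels_gt :
  ltb (Smu_le le mu) x0 (mkSmu le mu (val K) (lift_labels K d c') lift_labels_valid).
Proof. by rewrite Smu_gt_x0 (valP K); apply/forall_inP => e /lift_labels_I ->. Qed.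

End Lift.

Definition of_Lmunu (t : Lmunu (link_le le I) (mu_tilde le mu I) (nu_tilde le mu I)) : Up :=
  exist (fun p => ltb (Smu_le le mu) x0 p) _ (lift_labels_gt (valP t)).

Lemma of_LmunuK : cancel of_Lmunu to_Lmunu.
Proof.
case=> [[[K d] c'] hdc]; apply: val_inj.
have eK : up_link (of_Lmunu (exist _ (K, d, c') hdc)) = K by apply: val_inj.
by rewrite /= eK /up_labels /= vertex_labels_lift // edge_labels_lift.
Qed.

Lemma to_LmunuK : cancel to_Lmunu of_Lmunu.
Proof. by move=> x; apply: to_Lmunu_inj; rewrite of_LmunuK. Qed.

End LinkOfInflation.

Unset Implicit Arguments.

Theorem lemma5p6 (T : finType) (le : rel T) (hS : simplicial_poset le)
  (mu : T -> nat) (hmu : forall e : T, dim le e = 1 -> 0 < mu e)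
  (I : T) (c : {ffun T -> nat}) (hc : valid_c le mu I c) :
  poset_iso (uplink_le (Smu_le le mu) (mkSmu le mu I c hc))
            (Lmunu_le (link_le le I) (mu_tilde le mu I) (nu_tilde le mu I)).
Proof.
exists (to_Lmunu hS (hc := hc)); split; last exact: to_Lmunu_mono.
by exists (of_Lmunu hS hmu hc); [apply: to_LmunuK | apply: of_LmunuK].
Qed.
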